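(* For every $n\ge2$, the group $\mathcal{P}(\mathrm{Cr}_n)$ is isomorphic to a semidirect product $\mathbb{Z}_{2n}\rtimes\mathbb{Z}_2$ (namely the dihedral group of order $4n$).
   Context: For $n\ge2$, $\mathrm{Cr}_n$ is the poset $\{x_1,\dots,x_n,y_1,\dots,y_n\}$ whose only relations between distinct elements are $x_i<y_i$ ($1\le i\le n$), $x_{i+1}<y_i$ ($1\le i\le n-1$) and $x_1<y_n$. For a finite poset $X$ and $x<y$, $e_{xy}$ denotes the incidence-algebra basis element (indicator of $(x,y)$), and $B=\{e_{xy}:x<y\}$. A bijection $\theta:B\to B$ is proper if there is an automorphism $\lambda$ of $X$ with $\theta(e_{xy})=e_{\lambda(x)\lambda(y)}$ for all $x<y$, or an anti-automorphism (order-reversing bijection) $\lambda$ of $X$ with $\theta(e_{xy})=e_{\lambda(y)\lambda(x)}$ for all $x<y$; $\mathcal{P}(X)$ is the group (under composition) of proper bijections of $B$. *)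

From HB Require Import structures.
From mathcomp Require Import all_boot all_order all_fingroup all_solvable.

Set Implicit Arguments.
Unset Strict Implicit.
Unset Printing Implicit Defensive.

(* The crown poset Cr_n.  Its carrier is bool * 'I_n:
   (false, i) stands for x_{i+1} and (true, i) for y_{i+1} (0-indexed i). *)
Definition CrX (n : nat) : finType := (bool * 'I_n)%type.

(* Strict order of Cr_n: the only relations between distinct elements are
   x_i < y_i, x_{i+1} < y_i (1 <= i <= n-1), x_1 < y_n.
   0-indexed: x_j < y_i  iff  j = i  or  j = i+1 (mod n). *)
Definition cr_lt (n : nat) (a b : CrX n) : bool :=
  [&& ~~ a.1, b.1 & (a.2 == b.2 :> nat) || (a.2 == b.2.+1 %% n :> nat)].

Definition cr_le (n : nat) (a b : CrX n) : bool := (a == b) || cr_lt a b.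

(* The index set B = { e_xy : x < y } of the incidence-algebra basis. *)
Definition CrB (n : nat) : finType := {p : CrX n * CrX n | cr_lt p.1 p.2}.

Definition is_poset_auto (n : nat) (l : {perm CrX n}) : bool :=
  [forall a, [forall b, cr_le (l a) (l b) == cr_le a b]].

Definition is_poset_antiauto (n : nat) (l : {perm CrX n}) : bool :=
  [forall a, [forall b, cr_le (l a) (l b) == cr_le b a]].

Definition is_proper (n : nat) (th : {perm CrB n}) : bool :=
  [exists l : {perm CrX n},
     (is_poset_auto l &&
      [forall e : CrB n, val (th e) == (l (val e).1, l (val e).2)])
  || (is_poset_antiauto l &&
      [forall e : CrB n, val (th e) == (l (val e).2, l (val e).1)])].

Definition proper_bijections (n : nat) : {set {perm CrB n}} :=
  [set th | is_proper th].

(* Label x_i by 2i and y_i by 2i+1 in Z/2nZ.  Then x_j < y_i exactly when the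
   labels are adjacent on the 2n-cycle, so every automorphism or
   anti-automorphism of Cr_n is an automorphism k |-> c +- k of the cycle; it
   preserves the order iff c is even, and each of these 4n maps occurs.  The
   induced bijections of B are pairwise distinct, so P(Cr_n) has order 4n, and
   it is generated by the two distinct involutions induced by k |-> -k and
   k |-> 1 - k.  A finite group generated by two distinct involutions is
   dihedral of its own order. *)

Set Warnings "-notation-overridden,-ambiguous-paths".
From mathcomp Require Import all_boot all_order all_algebra all_fingroup all_solvable.
From mathcomp Require Import zify.

Set Implicit Arguments.
Unset Strict Implicit.
Unset Printing Implicit Defensive.
Import GRing.Theory.

Section Dihedral.
Local Open Scope ring_scope.
Variable R : pzRingType.
Implicit Types (c k u v : R) (s : bool).

Definition cycle_adj u v := (v == u + 1) || (u == v + 1).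

Definition dihedral c s k := c + (-1) ^+ s * k.

Lemma cycle_adj_sym u v : cycle_adj u v = cycle_adj v u.
Proof. by rewrite /cycle_adj orbC. Qed.

Lemma cycle_adj_dihedral c s u v :
  cycle_adj (dihedral c s u) (dihedral c s v) = cycle_adj u v.
Proof.
have reflect_eq x y : (c - x == c - y + 1) = (y == x + 1).
  by rewrite -addrA (inj_eq (addrI c)) -(inj_eq oppr_inj) opprD !opprK eq_sym subr_eq.
rewrite /cycle_adj /dihedral !mulr_sign; case: s.
  by rewrite !reflect_eq orbC.
by rewrite -!addrA !(inj_eq (addrI c)).
Qed.

Lemma dihedral_comp c s c' s' k :
  dihedral c' s' (dihedral c s k) = dihedral (dihedral c' s' c) (s (+) s') k.
Proof. by rewrite /dihedral addbC signr_addb mulrDr addrA mulrA. Qed.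

Lemma dihedral_inj c s : injective (dihedral c s).
Proof. by move=> u v /addrI /(can_inj (signrMK s)). Qed.

Lemma dihedral0 c s : dihedral c s 0 = c.
Proof. by rewrite /dihedral mulr0 addr0. Qed.

Lemma dihedral_id k : dihedral 0 false k = k.
Proof. by rewrite /dihedral mul1r add0r. Qed.

Lemma dihedral_eq01 c s c' s' : 1 != -1 :> R ->
  dihedral c s 0 = dihedral c' s' 0 -> dihedral c s 1 = dihedral c' s' 1 ->
  c = c' /\ s = s'.
Proof.
move=> one_neqN1; rewrite !dihedral0 => <- /addrI; rewrite !mulr1 => e.
split=> //; case: s s' e one_neqN1 => -[] //=; rewrite expr0 expr1 => e.
  by rewrite e eqxx.
by rewrite -e eqxx.
Qed.
End Dihedral.

Section CycleAutomorphisms.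
Local Open Scope ring_scope.
Variable p : nat.
Local Notation Z := 'I_p.+2.

Lemma cycle_adj_succ (j : nat) : cycle_adj (j%:R : Z) j.+1%:R.
Proof. by rewrite /cycle_adj natr1 eqxx. Qed.

Lemma cycle_automorphism_fix (W : Z -> Z) :
  injective W -> {homo W : u v / cycle_adj u v} -> W 0 = 0 -> W 1 = 1 -> W =1 id.
Proof.
move=> W_inj W_adj W0 W1.
have fix_prefix j : (j.+1 < p.+2)%N -> W j%:R = j%:R /\ W j.+1%:R = j.+1%:R.
  elim: j => [|j IH] lt_j; first by rewrite W0 W1.
  have [Wj Wj1] := IH (ltnW lt_j); split=> //.
  have := W_adj _ _ (cycle_adj_succ j.+1); rewrite Wj1 /cycle_adj natr1.
  case/orP=> /eqP // /esym/(canRL (addrK 1)).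
  rewrite -[X in X - 1]natr1 addrK -Wj => /W_inj.
  by rewrite !Zp_nat => /(congr1 val); rewrite /= !modn_small //; lia.
move=> k; rewrite -(natr_Zp k).
by case: (nat_of_ord k) (ltn_ord k) => [|j] lt_k; [rewrite W0 | case: (fix_prefix j lt_k)].
Qed.

Lemma cycle_automorphism_dihedral (W : Z -> Z) :
  injective W -> {homo W : u v / cycle_adj u v} -> exists c s, W =1 dihedral c s.
Proof.
move=> W_inj W_adj.
pose c := W 0.
have [s W1] : exists s, W 1 = dihedral c s 1.
  have : cycle_adj c (W 1) by apply: W_adj; rewrite /cycle_adj add0r eqxx.
  rewrite /cycle_adj; case/orP=> /eqP ->; [exists false | exists true].
    by rewrite /dihedral mul1r.
  by rewrite /dihedral mulN1r addrK.
(* W' is W followed by the dihedral map sending W 0 and W 1 back to 0 and 1. *)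
pose W' := dihedral (- ((-1) ^+ s * c)) s \o W.
have W'_fix : W' =1 id.
  apply: cycle_automorphism_fix.
  - by move=> u v /dihedral_inj /W_inj.
  - by move=> u v /W_adj; rewrite -(cycle_adj_dihedral (- ((-1) ^+ s * c)) s).
  - by rewrite /W' /= /dihedral -/c addNr.
  - by rewrite /W' /= W1 /dihedral mulrDr addKr signrMK.
exists c, s => k; rewrite -{2}(W'_fix k) /W' /= /dihedral mulrDr mulrN !signrMK.
by rewrite addNKr.
Qed.
End CycleAutomorphisms.

Section EvenCycleParity.
Local Open Scope ring_scope.
Variable p : nat.
Hypothesis even_modulus : ~~ odd p.+2.
Local Notation Z := 'I_p.+2.

Lemma oddZpD (u v : Z) : odd ((u + v)%R : Z) = odd u (+) odd v.
Proof.
have -> : odd ((u + v)%R : Z) = odd ((u + v) %% p.+2)%N by [].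
by rewrite odd_mod ?(negbTE even_modulus) // oddD.
Qed.

Lemma oddZpN (u : Z) : odd ((- u)%R : Z) = odd u.
Proof.
have -> : odd ((- u)%R : Z) = odd ((p.+2 - u) %% p.+2)%N by [].
rewrite odd_mod ?(negbTE even_modulus) // oddB ?(ltnW (ltn_ord u)) //.
by rewrite (negbTE even_modulus).
Qed.

Lemma oddZp1 : odd (1%R : Z).
Proof. by []. Qed.

Lemma odd_dihedral (c : Z) s k : odd (dihedral c s k) = odd c (+) odd k.
Proof. by rewrite oddZpD mulr_sign; case: s; rewrite ?oddZpN. Qed.

Lemma cycle_adj_odd (u v : Z) : cycle_adj u v -> odd v = ~~ odd u.
Proof. by case/orP=> /eqP ->; rewrite oddZpD oddZp1; case: (odd _). Qed.
End EvenCycleParity.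

Section EdgeImage.
Variable T : finType.

Definition edge_image (l : {perm T}) (rev : bool) (e : T * T) : T * T :=
  if rev then (l e.2, l e.1) else (l e.1, l e.2).

Lemma edge_image_inj l rev : injective (edge_image l rev).
Proof. by case: rev => -[a b] [a' b'] [/perm_inj -> /perm_inj ->]. Qed.

Lemma edge_imageM l rev l' rev' e :
  edge_image l' rev' (edge_image l rev e) = edge_image (l * l') (rev (+) rev') e.
Proof. by case: rev; case: rev'; rewrite /edge_image /= !permM. Qed.

Lemma edge_image1 e : edge_image 1 false e = e.
Proof. by rewrite /edge_image !perm1; case: e. Qed.
End EdgeImage.

Section Crown.
Variable m : nat.
Local Notation n := m.+2.
Local Notation N := m.*2.+4.
Local Notation Z := 'I_N.
Implicit Types (a b v : CrX n) (c k : Z) (s : bool).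

(* x_i and y_i get the labels 2i and 2i+1 of Z/2nZ, which turns the Hasse
   diagram of Cr_n into the 2n-cycle (see cr_ltE). *)
Definition cr_index (v : CrX n) : Z := inord (v.2.*2 + v.1).
Definition cr_vertex (k : Z) : CrX n := (odd k, inord k./2).

Lemma cr_index_val v : cr_index v = v.2.*2 + v.1 :> nat.
Proof. by case: v => b [i lt_i]; rewrite inordK //=; case: b; lia. Qed.

Lemma cr_indexK : cancel cr_index cr_vertex.
Proof.
case=> b i; rewrite /cr_vertex cr_index_val /= addnC oddD odd_double half_bit_double.
by congr pair; [case: b | apply/val_inj/inordK].
Qed.

Lemma cr_vertexK : cancel cr_vertex cr_index.
Proof.
move=> k; apply/val_inj => /=; rewrite cr_index_val /= inordK ?ltn_half_double //.
by rewrite addnC odd_double_half.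
Qed.

Lemma odd_cr_index v : odd (cr_index v) = v.1.
Proof. by rewrite cr_index_val oddD odd_double; case: v.1. Qed.

Local Open Scope ring_scope.

Lemma cr_ltE a b : cr_lt a b =
  [&& ~~ odd (cr_index a), odd (cr_index b) & cycle_adj (cr_index a) (cr_index b)].
Proof.
case: a b => [[] i] [[] j]; rewrite /cr_lt !odd_cr_index //=.
rewrite /cycle_adj -!val_eqE /= !cr_index_val /= addn0 (modn_small (_ : 1 < N)%N) //.
have lt_i : (i.*2 + 1 < N)%N by have := ltn_ord i; lia.
have mod_succ : ((j.*2 + 1 + 1) %% N = (j.+1 %% n).*2)%N.
  by rewrite -[RHS]muln2 muln_modl; congr modn; lia.
by rewrite (modn_small lt_i) mod_succ eqn_add2r !(inj_eq double_inj) eq_sym.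
Qed.

Lemma cr_index_inj : injective cr_index. Proof. exact: can_inj cr_indexK. Qed.
Lemma cr_vertex_inj : injective cr_vertex. Proof. exact: can_inj cr_vertexK. Qed.

Lemma even_N : ~~ odd N.
Proof. by rewrite /= odd_double. Qed.

Definition cr_dihedral_fun (c : Z) s v := cr_vertex (dihedral c s (cr_index v)).

Lemma cr_dihedral_fun_inj c s : injective (cr_dihedral_fun c s).
Proof.
by move=> u v /cr_vertex_inj /dihedral_inj /cr_index_inj.
Qed.

Definition cr_dihedral c s : {perm CrX n} := perm (@cr_dihedral_fun_inj c s).

Lemma cr_dihedral_vertex c s k :
  cr_dihedral c s (cr_vertex k) = cr_vertex (dihedral c s k).
Proof. by rewrite permE /cr_dihedral_fun cr_vertexK. Qed.

Lemma cr_index_dihedral c s v :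
  cr_index (cr_dihedral c s v) = dihedral c s (cr_index v).
Proof. by rewrite permE /cr_dihedral_fun cr_vertexK. Qed.

Lemma cr_dihedralM c s c' s' :
  (cr_dihedral c s * cr_dihedral c' s')%g = cr_dihedral (dihedral c' s' c) (s (+) s').
Proof.
by apply/permP => v; apply: cr_index_inj; rewrite permM !cr_index_dihedral dihedral_comp.
Qed.

Lemma cr_dihedral1 : cr_dihedral 0 false = 1%g.
Proof.
by apply/permP => v; apply: cr_index_inj; rewrite cr_index_dihedral dihedral_id perm1.
Qed.

Lemma cr_lt_dihedral c s a b :
  cr_lt (cr_dihedral c s a) (cr_dihedral c s b) = if odd c then cr_lt b a else cr_lt a b.
Proof.
rewrite !cr_ltE !cr_index_dihedral !odd_dihedral ?even_N // cycle_adj_dihedral.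
by case: (odd c); rewrite //= negbK (cycle_adj_sym (cr_index b)) andbCA.
Qed.

Lemma cr_lt_irr a : cr_lt a a = false.
Proof. by rewrite /cr_lt; case: a.1. Qed.

Lemma cr_lt_neq_le a b : cr_lt a b = (a != b) && cr_le a b.
Proof. by rewrite /cr_le; case: eqP => [->|]; rewrite ?cr_lt_irr. Qed.

Lemma cr_le_dihedral c s a b :
  cr_le (cr_dihedral c s a) (cr_dihedral c s b) = if odd c then cr_le b a else cr_le a b.
Proof.
by rewrite /cr_le (inj_eq perm_inj) cr_lt_dihedral; case: (odd c); rewrite // eq_sym.
Qed.

Lemma cr_comparableE a b :
  cr_lt a b || cr_lt b a = cycle_adj (cr_index a) (cr_index b).
Proof.
rewrite !cr_ltE (cycle_adj_sym (cr_index b)).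
case: (boolP (cycle_adj _ _)) => [/(cycle_adj_odd even_N) -> | _].
  by case: (odd _).
by rewrite !andbF.
Qed.

Lemma cr_lt_vertex01 : cr_lt (cr_vertex 0) (cr_vertex 1).
Proof. by rewrite cr_ltE !cr_vertexK oddZp1 /cycle_adj add0r eqxx. Qed.

Lemma cr_lt_vertex0N1 : cr_lt (cr_vertex 0) (cr_vertex (-1)).
Proof.
rewrite cr_ltE !cr_vertexK oddZpN ?even_N // oddZp1 /cycle_adj.
by apply/orP; right; apply/eqP; rewrite addNr.
Qed.

Section OrderPerm.
Variables (l : {perm CrX n}) (rev : bool).
Hypothesis l_le : forall x y, cr_le (l x) (l y) = if rev then cr_le y x else cr_le x y.

Lemma cr_lt_perm x y : cr_lt (l x) (l y) = if rev then cr_lt y x else cr_lt x y.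
Proof. by rewrite !cr_lt_neq_le (inj_eq perm_inj) l_le; case: rev; rewrite // eq_sym. Qed.

Lemma cr_order_perm_dihedral : exists c s, l = cr_dihedral c s /\ odd c = rev.
Proof.
pose W k := cr_index (l (cr_vertex k)).
have W_inj : injective W by move=> u v /cr_index_inj /perm_inj /cr_vertex_inj.
have W_adj : {homo W : u v / cycle_adj u v}.
  move=> u v; rewrite -[cycle_adj u v](congr2 (@cycle_adj _) (cr_vertexK u) (cr_vertexK v)).
  by rewrite -!cr_comparableE !cr_lt_perm; case: rev; rewrite // orbC.
have [c [s W_dih]] := cycle_automorphism_dihedral W_inj W_adj.
have l_dih : l = cr_dihedral c s.
  apply/permP => v; apply: cr_index_inj.
  by rewrite cr_index_dihedral -W_dih /W cr_indexK.
exists c, s; split=> //.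
have := cr_lt_perm (cr_vertex 0) (cr_vertex 1).
rewrite l_dih !cr_lt_dihedral cr_lt_vertex01.
have -> : cr_lt (cr_vertex 1) (cr_vertex 0) = false.
  by rewrite cr_ltE cr_vertexK oddZp1.
by case: (odd c); case: rev.
Qed.
End OrderPerm.

Lemma cr_lt_edge_image c s e : cr_lt e.1 e.2 ->
  let e' := edge_image (cr_dihedral c s) (odd c) e in cr_lt e'.1 e'.2.
Proof. by rewrite /edge_image; case: ifP => odd_c /=; rewrite cr_lt_dihedral odd_c. Qed.

Definition theta_fun c s (e : CrB n) : CrB n :=
  insubd e (edge_image (cr_dihedral c s) (odd c) (val e)).

Lemma theta_fun_val c s e :
  val (theta_fun c s e) = edge_image (cr_dihedral c s) (odd c) (val e).
Proof. by rewrite insubdK //; apply: cr_lt_edge_image; apply: (valP e). Qed.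

Lemma theta_fun_inj c s : injective (theta_fun c s).
Proof.
by move=> e e' /(congr1 val); rewrite !theta_fun_val => /edge_image_inj /val_inj.
Qed.

Definition theta c s : {perm CrB n} := perm (@theta_fun_inj c s).

Lemma theta_val c s e : val (theta c s e) = edge_image (cr_dihedral c s) (odd c) (val e).
Proof. by rewrite permE theta_fun_val. Qed.

Lemma thetaM c s c' s' :
  (theta c s * theta c' s')%g = theta (dihedral c' s' c) (s (+) s').
Proof.
apply/permP => e; apply: val_inj.
rewrite permM !theta_val edge_imageM cr_dihedralM odd_dihedral ?even_N //.
by rewrite [odd c (+) _]addbC.
Qed.

Lemma theta1 : theta 0 false = 1%g.
Proof.
by apply/permP => e; apply: val_inj; rewrite theta_val cr_dihedral1 edge_image1 perm1.
Qed.

Lemma theta_proper c s : theta c s \in proper_bijections n.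
Proof.
rewrite inE; apply/existsP; exists (cr_dihedral c s).
have theta_edges :
    [forall e, val (theta c s e) == edge_image (cr_dihedral c s) (odd c) (val e)].
  by apply/forallP => e; rewrite theta_val.
have le_l a b := cr_le_dihedral c s a b.
by case: (odd c) le_l theta_edges => le_l theta_edges; apply/orP; [right | left];
  rewrite theta_edges andbT; apply/'forall_forallP => a b; rewrite le_l.
Qed.

Lemma proper_bijection_edge_image th : th \in proper_bijections n ->
  exists (l : {perm CrX n}) rev,
    (forall a b, cr_le (l a) (l b) = if rev then cr_le b a else cr_le a b)
    /\ forall e, val (th e) = edge_image l rev (val e).
Proof.
rewrite inE => /existsP [l /orP [] /andP [/'forall_forallP l_le /forallP th_e]];
  [exists l, false | exists l, true]; split=> [a b|e]; by apply/eqP; rewrite ?l_le ?th_e.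
Qed.

Lemma proper_theta th : th \in proper_bijections n -> exists c s, th = theta c s.
Proof.
case/proper_bijection_edge_image => l [rev [l_le th_e]].
have [c [s [l_dih odd_c]]] := cr_order_perm_dihedral l_le.
by exists c, s; apply/permP => e; apply: val_inj; rewrite th_e theta_val l_dih odd_c.
Qed.

Lemma oneZ_neqN1 : (1 : Z) != -1.
Proof. by rewrite -val_eqE /= !modn_small. Qed.

Lemma theta_inj c s c' s' : theta c s = theta c' s' -> c = c' /\ s = s'.
Proof.
move=> eq_theta.
have edge k k' : cr_lt (cr_vertex k) (cr_vertex k') ->
    edge_image (cr_dihedral c s) (odd c) (cr_vertex k, cr_vertex k')
  = edge_image (cr_dihedral c' s') (odd c') (cr_vertex k, cr_vertex k').
  move=> lt_kk'; pose e : CrB n := Sub (cr_vertex k, cr_vertex k') lt_kk'.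
  by rewrite -[(cr_vertex k, cr_vertex k')]/(val e) -!theta_val eq_theta.
have := edge _ _ cr_lt_vertex01; have := edge _ _ cr_lt_vertex0N1.
rewrite /edge_image /= !cr_dihedral_vertex.
(* Equal parities give the same images of 0 and 1; opposite parities would
   identify the images of the two neighbours 1 and -1 of 0. *)
case: (odd c) (odd c') => -[] /pair_equal_spec[/cr_vertex_inj e1 /cr_vertex_inj e2]
  /pair_equal_spec[/cr_vertex_inj e3 /cr_vertex_inj e4];
  try exact: dihedral_eq01 oneZ_neqN1 _ _.
all: case/negP: oneZ_neqN1; apply/eqP/(@dihedral_inj _ c' s'); congruence.
Qed.

Lemma proper_bijectionsE : proper_bijections n = [set theta cs.1 cs.2 | cs : Z * bool].
Proof.
apply/setP => th; apply/idP/imsetP => [/proper_theta [c [s ->]] | [[c s] _ ->]].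
  by exists (c, s).
exact: theta_proper.
Qed.

Lemma card_proper_bijections : #|proper_bijections n| = (N * 2)%N.
Proof.
rewrite proper_bijectionsE card_imset; first by rewrite card_prod card_ord card_bool.
by move=> [c s] [c' s'] /theta_inj /= [-> ->].
Qed.

Lemma group_set_proper_bijections : group_set (proper_bijections n).
Proof.
apply/group_setP; split; first by rewrite -theta1 theta_proper.
move=> _ _ /proper_theta [c [s ->]] /proper_theta [c' [s' ->]].
by rewrite thetaM theta_proper.
Qed.

Canonical proper_bijections_group := Group group_set_proper_bijections.

Lemma order_theta_reflection c : #[theta c true]%g = 2.
Proof.
apply/prime_nt_dvdP => //.
  by rewrite order_eq1 -theta1; apply/eqP => /theta_inj [].
by rewrite order_dvdn expgS expg1 thetaM /dihedral expr1 mulN1r subrr theta1.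
Qed.

Lemma proper_bijections_gen :
  proper_bijections n = <<[set theta 0 true; theta 1%R true]>>%g.
Proof.
set G := <<_>>%g; apply/eqP; rewrite eqEsubset; apply/andP; split; last first.
  by rewrite gen_subG subUset !sub1set !theta_proper.
have rotation_in (j : nat) : theta j%:R false \in G.
  elim: j => [|j IH]; first by rewrite theta1 group1.
  have -> : theta j.+1%:R false = (theta j%:R false * (theta 0 true * theta 1%R true))%g.
    by rewrite !thetaM /dihedral /= expr0 expr1 mulN1r mul1r subr0 mulrS.
  by rewrite !groupM // mem_gen // !inE eqxx ?orbT.
apply/subsetP => _ /proper_theta [c [[] ->]]; last by rewrite -(natr_Zp c) rotation_in.
have -> : theta c true = (theta (- c) false * theta 0 true)%g.
  by rewrite thetaM /dihedral expr1 mulN1r opprK add0r.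
apply: groupM; first by rewrite -(natr_Zp (- c)) rotation_in.
by rewrite mem_gen // !inE eqxx.
Qed.

Lemma proper_bijections_dihedral : (proper_bijections n \isog 'D_(N * 2))%g.
Proof.
rewrite -card_proper_bijections proper_bijections_gen.
apply: involutions_gen_dihedral; rewrite ?order_theta_reflection //.
by apply/eqP => /theta_inj [/(congr1 val) /=]; rewrite modn_small.
Qed.
End Crown.

Theorem proposition4p11 (n : nat) (hn : 2 <= n) :
  (proper_bijections n \isog 'D_(4 * n))%g.
Proof.
case: n hn => [|[|m]] // _.
by rewrite mulnC (_ : (m.+2 * 4 = m.*2.+4 * 2)%N) ?proper_bijections_dihedral //; lia.
Qed.
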